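(* Let $d_1,d_2,d_3\in\mathbb{R}^2$ be unit vectors with $d_2=R(-\theta_{12})d_1$, $d_3=R(\theta_{13})d_1$, where $0<\theta_{12},\theta_{13}<\pi$ and $\theta_{12}+\theta_{13}\ge\pi$. Let $s\in\mathbb{C}$ with $\mathrm{Re}(s)>0$. Suppose $X^1,X^2,X^3:[0,\infty)\to\mathbb{C}^2$ are bounded smooth functions satisfying on $(0,\infty)$ $$sX^1\cdot d_1^\perp=X^1_{\sigma\sigma}\cdot d_1^\perp,\quad d_1\cdot X^1_{\sigma\sigma}=0,$$ $$sX^j\cdot d_j^\perp=-X^j_{\sigma\sigma\sigma\sigma}\cdot d_j^\perp,\quad d_j\cdot X^j_{\sigma\sigma}=0\qquad(j=2,3),$$ and the eight scalar conditions at $\sigma=0$: (i) $X^1(0)=X^2(0)=X^3(0)$; (ii) $d_1\cdot X^j_\sigma+d_j\cdot X^1_\sigma-(d_1\cdot d_j)(d_1\cdot X^1_\sigma+d_j\cdot X^j_\sigma)=0$ for $j=2,3$; (iii) $X^2_{\sigma\sigma}\cdot d_2^\perp=-X^3_{\sigma\sigma}\cdot d_3^\perp$; (iv) $X^2_{\sigma\sigma\sigma}\cdot d_2^\perp=X^3_{\sigma\sigma\sigma}\cdot d_3^\perp$. Then $X^1\equiv X^2\equiv X^3\equiv0$.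
   Context: $R(\varphi)$ denotes counterclockwise rotation by $\varphi$ and $d^\perp=R(\pi/2)d$; the dot product on $\mathbb{C}^2$ is bilinear. This is the Laplace-transformed (zero initial data) linearization, around straight rays with directions $d_1$ (grain boundary) and $d_2,d_3$ (exterior surface branches) meeting at a triple junction at $\sigma=0$, of the partial differential algebraic system $X^1_t\cdot\vec n-\kappa=0$, $X^j_t\cdot\vec n+\kappa_{ss}=0$ ($j=2,3$), $X^i_\sigma\cdot X^i_{\sigma\sigma}=0$ ($i=1,2,3$), with the linearized common-point, Young angle, curvature-continuity and mass-flux-balance junction conditions (no artificial tangential conditions). *)

From Stdlib Require Import Reals.
From Coquelicot Require Import Coquelicot.
Open Scope R_scope.

(* complex numbers (Coquelicot: Complex.C = R * R, real and imaginary part) *)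
Notation CC := Complex.C.

Definition vec2 := (R * R)%type.
Definition C2 := (CC * CC)%type.
Definition C2zero : C2 := (RtoC 0, RtoC 0).

Definition rot (phi : R) (d : vec2) : vec2 :=
  (cos phi * fst d - sin phi * snd d, sin phi * fst d + cos phi * snd d).
Definition perp (d : vec2) : vec2 := rot (PI / 2) d.

Definition rdot (u v : vec2) : R := fst u * fst v + snd u * snd v.

(* bilinear dot product on C^2, specialized to a real second argument
   (real vectors embedded into C^2) *)
Definition cdot (X : C2) (d : vec2) : CC :=
  (fst X * RtoC (fst d) + snd X * RtoC (snd d))%C.

Definition comps (X : R -> C2) : list (R -> R) :=
  (fun t => fst (fst (X t))) :: (fun t => snd (fst (X t))) ::
  (fun t => fst (snd (X t))) :: (fun t => snd (snd (X t))) :: nil.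

Definition Dn (n : nat) (X : R -> C2) (t : R) : C2 :=
  ((Derive_n (fun u => fst (fst (X u))) n t, Derive_n (fun u => snd (fst (X u))) n t),
   (Derive_n (fun u => fst (snd (X u))) n t, Derive_n (fun u => snd (snd (X u))) n t)).

Definition smooth (X : R -> C2) : Prop :=
  forall f, List.In f (comps X) -> forall n t, ex_derive_n f n t.

Definition bounded_on_halfline (X : R -> C2) : Prop :=
  exists M : R, forall t, 0 <= t -> Cmod (fst (X t)) <= M /\ Cmod (snd (X t)) <= M.

From Stdlib Require Import Reals Lra Psatz FunctionalExtensionality List.
From Coquelicot Require Import Coquelicot.
Open Scope R_scope.

(** Every component of every branch solves a linear ODE with constant coefficients on the
    half line: the tangential ones [T'' = 0], the normal one of the grain boundary
    [N'' = s N], those of the surface branches [N'''' = - s N].  Writing a solution as a sum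
    of exponentials and using boundedness to discard the growing modes gives relations at the
    junction: [T'(0) = 0], [N_1'(0) = - mu N_1(0)] with [mu^2 = s], and
    [N_j'' = (a + b) N_j' - a b N_j], [N_j''' = (a + b) N_j'' - a b N_j'] at [0], where [a], [b]
    are the roots of [z^4 = - s] with negative real part (so [a b = mu]).  Together with the
    junction conditions this is a linear system for [X(0)], [N_1'(0)], [N_2''(0)], [N_2'''(0)]
    whose determinant is [(a + b) (sin th12 + sin th13) + sin (th12 + th13)]; its real part is
    negative since [th12 + th13 >= pi].  Hence all junction data vanish, and a bounded solution
    with vanishing data is zero by uniqueness for the ODEs. *)

Lemma C_eq (x y : C) : Re x = Re y -> Im x = Im y -> x = y.
Proof. destruct x, y; unfold Re, Im; simpl; intros -> ->; reflexivity. Qed.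

Lemma Cmult_eq0 (z w : C) : z <> 0%C -> (z * w)%C = 0%C -> w = 0%C.
Proof. intros Hz H. replace w with (/ z * (z * w))%C by (field; auto). rewrite H. ring. Qed.

Lemma Csub0 (x y : C) : (x - y)%C = 0%C -> x = y.
Proof. intro H. replace x with (x - y + y)%C by ring. rewrite H. ring. Qed.

Lemma Re_neq0 (z : C) : Re z <> 0 -> z <> 0%C.
Proof. intros H E. apply H. rewrite E. reflexivity. Qed.

Lemma RtoC_neq0 (x : R) : x <> 0 -> RtoC x <> 0%C.
Proof. intros H E. apply H. injection E; auto. Qed.

(** * Complex-valued functions of a real variable *)

Definition is_cderive (f f' : R -> C) : Prop := forall t,
  is_derive (fun x => Re (f x)) t (Re (f' t)) /\ is_derive (fun x => Im (f x)) t (Im (f' t)).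

Lemma is_derive_eq (f : R -> R) (x l l' : R) : is_derive f x l -> l = l' -> is_derive f x l'.
Proof. intros H <-; exact H. Qed.

Lemma is_cderive_ext (f g f' g' : R -> C) : (forall t, f t = g t) -> (forall t, f' t = g' t) ->
  is_cderive f f' -> is_cderive g g'.
Proof.
  intros Hf Hf' H t. destruct (H t) as [H1 H2]. rewrite <- Hf'. split.
  - eapply is_derive_ext; [|exact H1]. intro u; simpl; rewrite Hf; reflexivity.
  - eapply is_derive_ext; [|exact H2]. intro u; simpl; rewrite Hf; reflexivity.
Qed.

Lemma is_cderive_pair (u v u' v' : R -> R) : (forall t, is_derive u t (u' t)) ->
  (forall t, is_derive v t (v' t)) -> is_cderive (fun t => (u t, v t)) (fun t => (u' t, v' t)).
Proof. intros Hu Hv t; split; simpl; auto. Qed.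

Lemma is_cderive_plus (f f' g g' : R -> C) : is_cderive f f' -> is_cderive g g' ->
  is_cderive (fun t => f t + g t)%C (fun t => f' t + g' t)%C.
Proof.
  intros Hf Hg t; destruct (Hf t) as [H1 H2]; destruct (Hg t) as [H3 H4]; split.
  - exact (is_derive_plus _ _ _ _ _ H1 H3).
  - exact (is_derive_plus _ _ _ _ _ H2 H4).
Qed.

Lemma is_cderive_minus (f f' g g' : R -> C) : is_cderive f f' -> is_cderive g g' ->
  is_cderive (fun t => f t - g t)%C (fun t => f' t - g' t)%C.
Proof.
  intros Hf Hg t; destruct (Hf t) as [H1 H2]; destruct (Hg t) as [H3 H4]; split.
  - exact (is_derive_minus _ _ _ _ _ H1 H3).
  - exact (is_derive_minus _ _ _ _ _ H2 H4).
Qed.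

Lemma is_cderive_mult (f f' g g' : R -> C) : is_cderive f f' -> is_cderive g g' ->
  is_cderive (fun t => f t * g t)%C (fun t => f' t * g t + f t * g' t)%C.
Proof.
  intros Hf Hg t; destruct (Hf t) as [H1 H2]; destruct (Hg t) as [H3 H4]; split.
  - pose proof (is_derive_mult _ _ _ _ _ H1 H3 Rmult_comm) as A.
    pose proof (is_derive_mult _ _ _ _ _ H2 H4 Rmult_comm) as B.
    eapply is_derive_eq; [exact (is_derive_minus _ _ _ _ _ A B)|].
    unfold minus, plus, opp, mult; simpl; unfold Re, Im, Cmult, Cplus; simpl; ring.
  - pose proof (is_derive_mult _ _ _ _ _ H1 H4 Rmult_comm) as A.
    pose proof (is_derive_mult _ _ _ _ _ H2 H3 Rmult_comm) as B.
    eapply is_derive_eq; [exact (is_derive_plus _ _ _ _ _ A B)|].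
    unfold plus, mult; simpl; unfold Re, Im, Cmult, Cplus; simpl; ring.
Qed.

Lemma is_cderive_const (c : C) : is_cderive (fun _ => c) (fun _ => 0%C).
Proof. intros t; split; (eapply is_derive_eq; [apply is_derive_const | reflexivity]). Qed.

Lemma is_cderive_scal (c : C) (f f' : R -> C) : is_cderive f f' ->
  is_cderive (fun t => c * f t)%C (fun t => c * f' t)%C.
Proof.
  intros H. eapply is_cderive_ext; [| |exact (is_cderive_mult _ _ _ _ (is_cderive_const c) H)];
  intro t; cbv beta; ring.
Qed.

Lemma is_cderive_id : is_cderive RtoC (fun _ => 1%C).
Proof.
  intros t; split; simpl.
  - apply (is_derive_id (K:=R_AbsRing)).
  - eapply is_derive_eq; [apply is_derive_const | reflexivity].
Qed.

Lemma is_derive_const_on (f f' : R -> R) : (forall t, is_derive f t (f' t)) ->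
  (forall t, 0 < t -> f' t = 0) -> forall t, 0 <= t -> f t = f 0.
Proof.
  intros Hd H0 t Ht. destruct (Req_dec t 0) as [->|Hn]; [reflexivity|].
  destruct (MVT_cor2 f f' 0 t) as [c [Hc1 Hc2]]; [lra| |].
  - intros c _. apply is_derive_Reals, Hd.
  - rewrite H0 in Hc1 by lra. lra.
Qed.

Lemma is_cderive_const_on (g g' : R -> C) : is_cderive g g' -> (forall t, 0 < t -> g' t = 0%C) ->
  forall t, 0 <= t -> g t = g 0.
Proof.
  intros Hd H0 t Ht. apply C_eq.
  - apply (is_derive_const_on (fun x => Re (g x)) (fun x => Re (g' x))); auto.
    + intros u; apply Hd.
    + intros u Hu; rewrite H0 by auto; reflexivity.
  - apply (is_derive_const_on (fun x => Im (g x)) (fun x => Im (g' x))); auto.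
    + intros u; apply Hd.
    + intros u Hu; rewrite H0 by auto; reflexivity.
Qed.

Definition cexp (k : C) (t : R) : C :=
  (exp (Re k * t) * cos (Im k * t), exp (Re k * t) * sin (Im k * t)).

Lemma cexp_0 (k : C) : cexp k 0 = 1%C.
Proof. unfold cexp. rewrite !Rmult_0_r, exp_0, cos_0, sin_0. apply C_eq; simpl; ring. Qed.

Lemma cexp_plus (k : C) (t h : R) : cexp k (t + h) = (cexp k t * cexp k h)%C.
Proof.
  unfold cexp. rewrite !Rmult_plus_distr_l, exp_plus, cos_plus, sin_plus.
  apply C_eq; simpl; ring.
Qed.

Lemma cexp_opp_mul (k : C) (t : R) : (cexp k t * cexp (- k) t)%C = 1%C.
Proof.
  unfold cexp, Re, Im; simpl.
  replace (- fst k * t) with (- (fst k * t)) by ring.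
  replace (- snd k * t) with (- (snd k * t)) by ring.
  rewrite cos_neg, sin_neg.
  assert (Hexp : exp (fst k * t) * exp (- (fst k * t)) = 1)
    by (rewrite <- exp_plus, Rplus_opp_r; apply exp_0).
  pose proof (sin2_cos2 (snd k * t)). unfold Rsqr in *.
  apply C_eq; simpl; nra.
Qed.

Lemma Cmod_cexp (k : C) (t : R) : Cmod (cexp k t) = exp (Re k * t).
Proof.
  unfold Cmod, cexp; simpl.
  pose proof (sin2_cos2 (Im k * t)). unfold Rsqr in *.
  transitivity (sqrt (exp (Re k * t) * exp (Re k * t))).
  - f_equal. nra.
  - apply sqrt_square. left; apply exp_pos.
Qed.

Lemma is_cderive_cexp (k : C) : is_cderive (cexp k) (fun t => k * cexp k t)%C.
Proof.
  intros t; split; unfold cexp; simpl.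
  - eapply is_derive_eq. auto_derive; auto. unfold Re, Im; ring.
  - eapply is_derive_eq. auto_derive; auto. unfold Re, Im; ring.
Qed.

Lemma cos_sin_shift_PI (x : R) : cos (x + PI) = cos x -> sin (x + PI) = sin x -> False.
Proof.
  rewrite neg_cos, neg_sin. intros Hc Hs.
  pose proof (sin2_cos2 x). unfold Rsqr in *.
  assert (cos x = 0) by lra. assert (sin x = 0) by lra. nra.
Qed.

Lemma cexp_separate (k3 k4 : C) : k3 <> k4 -> exists h, 0 <= h /\ cexp k3 h <> cexp k4 h.
Proof.
  intros Hne. destruct (Req_dec (Re k3) (Re k4)) as [HRe|HRe].
  - assert (Hd : Im k3 - Im k4 <> 0) by (intro H; apply Hne, C_eq; lra).
    set (h := PI / Rabs (Im k3 - Im k4)).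
    assert (Hh : 0 < h).
    { apply Rdiv_lt_0_compat; [apply PI_RGT_0 | apply Rabs_pos_lt; auto]. }
    exists h; split; [lra|]. intro He.
    unfold cexp in He. rewrite HRe in He. injection He as Hc Hs.
    pose proof (exp_pos (Re k4 * h)).
    apply Rmult_eq_reg_l in Hc; [|lra]. apply Rmult_eq_reg_l in Hs; [|lra].
    destruct (Rcase_abs (Im k3 - Im k4)) as [Hneg|Hpos].
    + assert (E : Im k4 * h = Im k3 * h + PI).
      { unfold h. rewrite Rabs_left by lra. field. lra. }
      rewrite E in Hc, Hs. apply (cos_sin_shift_PI (Im k3 * h)); auto.
    + assert (E : Im k3 * h = Im k4 * h + PI).
      { unfold h. rewrite Rabs_right by lra. field. lra. }
      rewrite E in Hc, Hs. apply (cos_sin_shift_PI (Im k4 * h)); auto.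
  - exists 1. split; [lra|]. intro He. apply HRe.
    apply (f_equal Cmod) in He. rewrite !Cmod_cexp in He.
    apply exp_inv in He. lra.
Qed.

Lemma first_order_zero (f f' : R -> C) (k : C) : is_cderive f f' ->
  (forall t, 0 < t -> f' t = (k * f t)%C) ->
  f 0 = 0%C -> forall t, 0 <= t -> f t = 0%C.
Proof.
  intros Hd Hk H0 t Ht.
  assert (Hc : (f t * cexp (- k) t)%C = (f 0 * cexp (- k) 0)%C).
  { apply (is_cderive_const_on _ _ (is_cderive_mult _ _ _ _ Hd (is_cderive_cexp (- k)))); auto.
    intros u Hu. rewrite Hk by auto. ring. }
  rewrite H0, Cmult_0_l in Hc.
  replace (f t) with (f t * cexp (- k) t * cexp k t)%C.
  - rewrite Hc. ring.
  - rewrite <- Cmult_assoc, (Cmult_comm (cexp (- k) t)), cexp_opp_mul. ring.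
Qed.

(** * Linear equations with constant coefficients *)

Definition chain (V : nat -> R -> C) : Prop := forall j, is_cderive (V j) (V (S j)).

Definition dsub (r : C) (V : nat -> R -> C) : nat -> R -> C :=
  fun j t => (V (S j) t - r * V j t)%C.

(** [dprod [r1; ...; rn] V] is [(D - rn) ... (D - r1) V]. *)
Fixpoint dprod (l : list C) (V : nat -> R -> C) : nat -> R -> C :=
  match l with nil => V | r :: l' => dprod l' (dsub r V) end.

Lemma chain_dsub (r : C) (V : nat -> R -> C) : chain V -> chain (dsub r V).
Proof. intros H j. apply is_cderive_minus; [apply H | apply is_cderive_scal, H]. Qed.

Lemma chain_plus (V W : nat -> R -> C) :
  chain V -> chain W -> chain (fun j t => (V j t + W j t)%C).
Proof. intros HV HW j. apply is_cderive_plus; auto. Qed.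

Lemma chain_minus (V W : nat -> R -> C) :
  chain V -> chain W -> chain (fun j t => (V j t - W j t)%C).
Proof. intros HV HW j. apply is_cderive_minus; auto. Qed.

Lemma chain_zero_of_dprod_zero (l : list C) : forall V : nat -> R -> C, chain V ->
  (forall t, 0 < t -> dprod l V 0 t = 0%C) ->
  (forall j, (j < length l)%nat -> V j 0 = 0%C) ->
  forall t, 0 < t -> V 0%nat t = 0%C.
Proof.
  induction l as [|r l IH]; simpl; intros V HV Hl Hinit t Ht; auto.
  assert (HW : forall t, 0 < t -> dsub r V 0 t = 0%C).
  { apply IH; auto. apply chain_dsub, HV.
    intros j Hj. unfold dsub. rewrite !Hinit by lia. ring. }
  apply (first_order_zero (V 0%nat) (V 1%nat) r (HV 0%nat)); [|apply Hinit; lia|lra].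
  intros u Hu. apply Csub0, HW, Hu.
Qed.

Lemma dprod_plus (l : list C) : forall V W : nat -> R -> C,
  dprod l (fun j t => (V j t + W j t)%C) = (fun j t => dprod l V j t + dprod l W j t)%C.
Proof.
  induction l as [|r l IH]; intros V W; simpl; auto.
  rewrite <- IH. f_equal. unfold dsub.
  apply functional_extensionality; intro j; apply functional_extensionality; intro t. ring.
Qed.

Lemma dprod_minus (l : list C) : forall V W : nat -> R -> C,
  dprod l (fun j t => (V j t - W j t)%C) = (fun j t => dprod l V j t - dprod l W j t)%C.
Proof.
  induction l as [|r l IH]; intros V W; simpl; auto.
  rewrite <- IH. f_equal. unfold dsub.
  apply functional_extensionality; intro j; apply functional_extensionality; intro t. ring.
Qed.

Lemma dprod_zero (l : list C) : dprod l (fun _ _ => 0%C) = (fun _ _ => 0%C).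
Proof.
  induction l as [|r l IH]; simpl; auto.
  rewrite <- IH at 2. f_equal. unfold dsub.
  apply functional_extensionality; intro j; apply functional_extensionality; intro t. ring.
Qed.

Fixpoint cpow (z : C) (n : nat) : C := match n with O => 1%C | S n => (z * cpow z n)%C end.

Definition expch (c r : C) : nat -> R -> C := fun j t => (c * cpow r j * cexp r t)%C.

Lemma chain_expch (c r : C) : chain (expch c r).
Proof.
  intros j.
  eapply is_cderive_ext; [| |exact (is_cderive_scal (c * cpow r j) _ _ (is_cderive_cexp r))];
    intro t; unfold expch; simpl; ring.
Qed.

Fixpoint charpoly (l : list C) (r : C) : C :=
  match l with nil => 1%C | x :: l' => ((r - x) * charpoly l' r)%C end.

Lemma charpoly_root (l : list C) (r : C) : In r l -> charpoly l r = 0%C.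
Proof.
  induction l as [|x l IH]; simpl; [tauto|].
  intros [->|H]; [ring|]. rewrite IH by auto. ring.
Qed.

Lemma dprod_expch (l : list C) : forall c r : C, dprod l (expch c r) = expch (c * charpoly l r) r.
Proof.
  induction l as [|x l IH]; intros c r; simpl.
  - unfold expch. apply functional_extensionality; intro j;
    apply functional_extensionality; intro t. ring.
  - replace (dsub x (expch c r)) with (expch (c * (r - x)) r).
    + rewrite IH. f_equal. ring.
    + unfold dsub, expch. apply functional_extensionality; intro j;
      apply functional_extensionality; intro t. simpl. ring.
Qed.

(** [expsum [(c1, r1); ...]] is the chain of [t |-> c1 exp (r1 t) + ...]. *)
Fixpoint expsum (cs : list (C * C)) (j : nat) (t : R) : C :=
  match cs with
  | nil => 0%C
  | (c, r) :: cs' => (expch c r j t + expsum cs' j t)%C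
  end.

Lemma chain_expsum (cs : list (C * C)) : chain (expsum cs).
Proof.
  induction cs as [|[c r] cs IH]; simpl.
  - intros j. apply is_cderive_const.
  - apply (chain_plus (expch c r) (expsum cs)); auto. apply chain_expch.
Qed.

Lemma dprod_expsum (l : list C) (cs : list (C * C)) : (forall c r, In (c, r) cs -> In r l) ->
  forall j t, dprod l (expsum cs) j t = 0%C.
Proof.
  induction cs as [|[c r] cs IH]; intros Hroots j t.
  - change (expsum nil) with (fun (_ : nat) (_ : R) => RtoC 0). rewrite dprod_zero. reflexivity.
  - change (expsum ((c, r) :: cs)) with (fun j t => expch c r j t + expsum cs j t)%C.
    rewrite dprod_plus, dprod_expch, IH by (intros; apply (Hroots c0); simpl; auto).
    unfold expch. rewrite charpoly_root by (apply (Hroots c); simpl; auto). ring.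
Qed.

Lemma chain_eq_expsum (l : list C) (cs : list (C * C)) (V : nat -> R -> C) :
  chain V -> (0 < length l)%nat ->
  (forall c r, In (c, r) cs -> In r l) ->
  (forall t, 0 < t -> dprod l V 0 t = 0%C) ->
  (forall j, (j < length l)%nat -> V j 0 = expsum cs j 0) ->
  forall t, 0 <= t -> V 0%nat t = expsum cs 0 t.
Proof.
  intros HV Hl Hroots Hode Hinit t Ht.
  destruct (Req_dec t 0) as [->|Ht0]; [apply Hinit, Hl|].
  apply Csub0. change ((fun j t => V j t - expsum cs j t)%C 0%nat t = 0%C).
  apply (chain_zero_of_dprod_zero l); [| |intros j Hj; simpl; rewrite Hinit by auto; ring|lra].
  - apply chain_minus; [exact HV | apply chain_expsum].
  - intros u Hu. rewrite dprod_minus, Hode, dprod_expsum by auto. ring.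
Qed.

(** * Bounded solutions on the half line *)

Definition cbounded (f : R -> C) : Prop := exists M, forall t, 0 <= t -> Cmod (f t) <= M.

Lemma cbounded_ext (f g : R -> C) : (forall t, 0 <= t -> f t = g t) -> cbounded f -> cbounded g.
Proof. intros E [M HM]. exists M. intros t Ht. rewrite <- E by auto. auto. Qed.

Lemma cbounded_const (c : C) : cbounded (fun _ => c).
Proof. exists (Cmod c). intros; lra. Qed.

Lemma cbounded_plus (f g : R -> C) : cbounded f -> cbounded g -> cbounded (fun t => f t + g t)%C.
Proof.
  intros [M HM] [N HN]. exists (M + N). intros t Ht.
  eapply Rle_trans; [apply Cmod_triangle|]. pose proof (HM t Ht); pose proof (HN t Ht); lra.
Qed.

Lemma cbounded_scal (c : C) (f : R -> C) : cbounded f -> cbounded (fun t => c * f t)%C.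
Proof.
  intros [M HM]. exists (Cmod c * M). intros t Ht. rewrite Cmod_mult.
  apply Rmult_le_compat_l; [apply Cmod_ge_0 | auto].
Qed.

Lemma cbounded_minus (f g : R -> C) : cbounded f -> cbounded g -> cbounded (fun t => f t - g t)%C.
Proof.
  intros Hf Hg. apply (cbounded_ext (fun t => f t + (-1) * g t)%C); [intros; ring|].
  apply cbounded_plus, cbounded_scal; auto.
Qed.

Lemma cbounded_shift (f : R -> C) (h : R) : 0 <= h -> cbounded f -> cbounded (fun t => f (t + h)).
Proof. intros Hh [M HM]. exists M. intros t Ht. apply HM. lra. Qed.

Lemma cbounded_cexp (k : C) : Re k <= 0 -> cbounded (cexp k).
Proof.
  intros Hk. exists 1. intros t Ht. rewrite Cmod_cexp, <- exp_0.
  destruct (Req_dec (Re k * t) 0) as [->|]; [lra|].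
  left; apply exp_increasing. nra.
Qed.

Lemma not_cbounded_linear_growth (f : R -> C) (a : R) : 0 < a ->
  (forall t, 0 <= t -> a * t <= Cmod (f t)) -> ~ cbounded f.
Proof.
  intros Ha Hf [M HM]. set (t := (Rabs M + 1) / a).
  assert (Ht : 0 <= t) by (unfold t; pose proof (Rabs_pos M); apply Rlt_le, Rdiv_lt_0_compat; lra).
  pose proof (Hf t Ht). pose proof (HM t Ht). pose proof (Rle_abs M).
  assert (a * t = Rabs M + 1) by (unfold t; field; lra). lra.
Qed.

Lemma cbounded_linear_eq0 (c : C) : cbounded (fun t => c * RtoC t)%C -> c = 0%C.
Proof.
  intros Hb. destruct (Ceq_dec c 0) as [|Hc]; auto. exfalso.
  revert Hb. apply (not_cbounded_linear_growth _ (Cmod c)); [apply Cmod_gt_0, Hc|].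
  intros t Ht. rewrite Cmod_mult, Cmod_R, Rabs_pos_eq by lra. lra.
Qed.

Lemma cbounded_cexp_eq0 (c k : C) : 0 < Re k -> cbounded (fun t => c * cexp k t)%C -> c = 0%C.
Proof.
  intros Hk Hb. destruct (Ceq_dec c 0) as [|Hc]; auto. exfalso.
  apply Cmod_gt_0 in Hc.
  revert Hb. apply (not_cbounded_linear_growth _ (Cmod c * Re k)); [nra|].
  intros t Ht. rewrite Cmod_mult, Cmod_cexp.
  assert (Re k * t <= exp (Re k * t)).
  { destruct (Req_dec (Re k * t) 0) as [->|H0]; [pose proof (exp_pos 0); lra|].
    pose proof (exp_ineq1 _ H0). lra. }
  nra.
Qed.

(** Shifting by [h] removes the mode [exp (k4 t)] and keeps [exp (k3 t)]. *)
Lemma cbounded_two_modes_eq0 (c3 c4 k3 k4 : C) (r : R -> C) : 0 < Re k3 -> 0 < Re k4 -> k3 <> k4 ->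
  cbounded r -> cbounded (fun t => c3 * cexp k3 t + c4 * cexp k4 t + r t)%C ->
  c3 = 0%C /\ c4 = 0%C.
Proof.
  intros H3 H4 Hne Hr HF.
  set (F := fun t => (c3 * cexp k3 t + c4 * cexp k4 t + r t)%C) in HF.
  destruct (cexp_separate k3 k4 Hne) as [h [Hh Hsep]].
  set (e := cexp k4 h).
  assert (Hc3 : c3 = 0%C).
  { apply (Cmult_eq0 (cexp k3 h - e)); [intro E; apply Hsep, Csub0, E|].
    rewrite Cmult_comm.
    apply (cbounded_cexp_eq0 _ k3 H3).
    apply (cbounded_ext (fun t => (F (t + h)%R - e * F t) - (r (t + h)%R - e * r t))%C).
    - intros t Ht. unfold F, e. rewrite !cexp_plus. ring.
    - apply cbounded_minus; apply cbounded_minus;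
        try apply cbounded_scal; try apply cbounded_shift; auto. }
  split; auto. subst c3.
  apply (cbounded_cexp_eq0 _ k4 H4).
  apply (cbounded_ext (fun t => F t - r t)%C); [intros t Ht; unfold F; ring|].
  apply cbounded_minus; auto.
Qed.

Lemma bounded_affine_const (V : nat -> R -> C) : chain V -> (forall t, 0 < t -> V 2%nat t = 0%C) ->
  cbounded (V 0%nat) -> V 1%nat 0 = 0%C /\ forall t, 0 <= t -> V 0%nat t = V 0%nat 0.
Proof.
  intros HV H2 Hb.
  assert (H1 : forall t, 0 <= t -> V 1%nat t = V 1%nat 0)
    by (apply (is_cderive_const_on _ _ (HV 1%nat)); auto).
  set (c := V 1%nat 0).
  assert (Hg : forall t, 0 <= t -> (V 0%nat t - c * t)%C = (V 0%nat 0 - c * 0)%C).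
  { apply (is_cderive_const_on (fun t => V 0%nat t - c * t)%C (fun t => V 1%nat t - c * 1)%C).
    - apply is_cderive_minus; [apply HV | apply is_cderive_scal, is_cderive_id].
    - intros t Ht. rewrite H1 by lra. fold c. ring. }
  assert (Hc : c = 0%C).
  { apply cbounded_linear_eq0.
    apply (cbounded_ext (fun t => V 0%nat t - V 0%nat 0)%C).
    - intros t Ht. specialize (Hg t Ht).
      replace (V 0%nat t) with (V 0%nat t - c * t + c * t)%C by ring. rewrite Hg. ring.
    - apply cbounded_minus; [exact Hb | apply cbounded_const]. }
  split; [exact Hc|]. intros t Ht. specialize (Hg t Ht). rewrite Hc in Hg.
  replace (V 0%nat t) with (V 0%nat t - 0 * t)%C by ring. rewrite Hg. ring.
Qed.

Lemma vandermonde2 (mu : C) (v : nat -> C) : mu <> 0%C ->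
  exists c1 c2, forall j, (j < 2)%nat -> v j = expsum ((c1, mu) :: (c2, - mu) :: nil)%C j 0.
Proof.
  intros Hmu.
  exists ((v 1%nat + mu * v 0%nat) / (2 * mu))%C, ((mu * v 0%nat - v 1%nat) / (2 * mu))%C.
  intros j Hj. simpl. unfold expch. rewrite !cexp_0.
  destruct j as [|[|j]]; [| |lia]; simpl; field; auto.
Qed.

Lemma bounded_second_order_slope (V : nat -> R -> C) (mu : C) : chain V -> 0 < Re mu ->
  (forall t, 0 < t -> V 2%nat t = (mu * mu * V 0%nat t)%C) -> cbounded (V 0%nat) ->
  V 1%nat 0 = (- mu * V 0%nat 0)%C.
Proof.
  intros HV Hmu Hode Hb.
  assert (Hmu0 : mu <> 0%C) by (apply Re_neq0; lra).
  destruct (vandermonde2 mu (fun j => V j 0) Hmu0) as (c1 & c2 & Hinit).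
  assert (Hrep : forall t, 0 <= t -> V 0%nat t = expsum ((c1, mu) :: (c2, - mu) :: nil)%C 0 t).
  { apply (chain_eq_expsum (mu :: (- mu)%C :: nil)); auto.
    - simpl; lia.
    - intros c r [E|[E|[]]]; injection E as <- <-; simpl; auto.
    - intros t Ht. simpl. unfold dsub. rewrite Hode by auto. ring. }
  assert (Hc1 : c1 = 0%C).
  { apply (cbounded_cexp_eq0 c1 mu Hmu).
    apply (cbounded_ext (fun t => V 0%nat t - c2 * cexp (- mu) t)%C).
    - intros t Ht. rewrite Hrep by auto. simpl. unfold expch. simpl. ring.
    - apply cbounded_minus; [exact Hb | apply cbounded_scal, cbounded_cexp].
      unfold Re in *; simpl; lra. }
  pose proof (Hinit 0%nat ltac:(lia)) as H0. pose proof (Hinit 1%nat ltac:(lia)) as H1.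
  simpl in H0, H1. unfold expch in H0, H1. rewrite cexp_0, Hc1 in H0, H1.
  simpl in H0, H1. rewrite H0, H1. ring.
Qed.

Lemma vandermonde4 (a b : C) (v : nat -> C) : a <> 0%C -> b <> 0%C -> (a * a - b * b)%C <> 0%C ->
  exists cp cm dp dm, forall j, (j < 4)%nat ->
    v j = expsum ((cp, a) :: (cm, - a) :: (dp, b) :: (dm, - b) :: nil)%C j 0.
Proof.
  intros Ha Hb Hab.
  set (Ea := ((v 2%nat - b * b * v 0%nat) / (a * a - b * b))%C).
  set (Oa := ((v 3%nat - b * b * v 1%nat) / (a * (a * a - b * b)))%C).
  set (Eb := ((v 2%nat - a * a * v 0%nat) / (b * b - a * a))%C).
  set (Ob := ((v 3%nat - a * a * v 1%nat) / (b * (b * b - a * a)))%C).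
  assert (Hba : (b * b - a * a)%C <> 0%C).
  { intro E. apply Hab. replace (a * a - b * b)%C with (- (b * b - a * a))%C by ring.
    rewrite E. ring. }
  (* [Ea = cp + cm] and [Oa = cp - cm]: the even-order data determine [Ea], [Eb], the
     odd-order data [Oa], [Ob]. *)
  exists ((Ea + Oa) / 2)%C, ((Ea - Oa) / 2)%C, ((Eb + Ob) / 2)%C, ((Eb - Ob) / 2)%C.
  intros j Hj. simpl. unfold expch. rewrite !cexp_0. unfold Ea, Oa, Eb, Ob.
  destruct j as [|[|[|[|j]]]]; [| | | |lia]; simpl; field; auto.
Qed.

Lemma bounded_fourth_order_relations (V : nat -> R -> C) (a b : C) :
  chain V -> Re a < 0 -> Re b < 0 -> (a * a)%C <> (b * b)%C ->
  (forall t, 0 < t -> V 4%nat t = ((a * a + b * b) * V 2%nat t - a * a * (b * b) * V 0%nat t)%C) ->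
  cbounded (V 0%nat) ->
  V 2%nat 0 = ((a + b) * V 1%nat 0 - a * b * V 0%nat 0)%C /\
  V 3%nat 0 = ((a + b) * V 2%nat 0 - a * b * V 1%nat 0)%C.
Proof.
  intros HV Ha Hb Hab Hode Hbd.
  assert (Hab' : (a * a - b * b)%C <> 0%C) by (intro E; apply Hab, Csub0, E).
  destruct (vandermonde4 a b (fun j => V j 0) ltac:(apply Re_neq0; lra)
              ltac:(apply Re_neq0; lra) Hab') as (cp & cm & dp & dm & Hinit).
  assert (Hrep : forall t, 0 <= t -> V 0%nat t =
    expsum ((cp, a) :: (cm, - a) :: (dp, b) :: (dm, - b) :: nil)%C 0 t).
  { apply (chain_eq_expsum (a :: (- a)%C :: b :: (- b)%C :: nil)); auto.
    - simpl; lia.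
    - intros c r [E|[E|[E|[E|[]]]]]; injection E as <- <-; simpl; auto.
    - intros t Ht. simpl. unfold dsub. rewrite Hode by auto. ring. }
  destruct (cbounded_two_modes_eq0 cm dm (- a) (- b) (fun t => cp * cexp a t + dp * cexp b t)%C)
    as [-> ->].
  - unfold Re in *; simpl; lra.
  - unfold Re in *; simpl; lra.
  - intro E. apply Hab. replace a with (- - a)%C by ring. rewrite E. ring.
  - apply cbounded_plus; apply cbounded_scal, cbounded_cexp; lra.
  - apply (cbounded_ext (V 0%nat)); [|exact Hbd].
    intros t Ht. rewrite Hrep by auto. simpl. unfold expch. simpl. ring.
  - cbv beta in Hinit.
    rewrite !(Hinit 0%nat), !(Hinit 1%nat), !(Hinit 2%nat), !(Hinit 3%nat) by lia.
    simpl. unfold expch. rewrite !cexp_0. simpl. split; ring.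
Qed.

(** * The three branches *)

Lemma Dn_0 (X : R -> C2) (t : R) : Dn 0 X t = X t.
Proof. unfold Dn; simpl. destruct (X t) as [[a b] [c d]]; reflexivity. Qed.

Definition dcomp (X : R -> C2) (e : vec2) : nat -> R -> C := fun j t => cdot (Dn j X t) e.

Lemma smooth_is_derive_Derive_n (f : R -> R) : (forall n t, ex_derive_n f n t) ->
  forall j t, is_derive (Derive_n f j) t (Derive_n f (S j) t).
Proof. intros H j t. apply Derive_correct. exact (H (S j) t). Qed.

Lemma chain_dcomp (X : R -> C2) (e : vec2) : smooth X -> chain (dcomp X e).
Proof.
  intros HX j.
  assert (H1 := smooth_is_derive_Derive_n _ (HX (fun t => fst (fst (X t))) ltac:(simpl; tauto)) j).
  assert (H2 := smooth_is_derive_Derive_n _ (HX (fun t => snd (fst (X t))) ltac:(simpl; tauto)) j).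
  assert (H3 := smooth_is_derive_Derive_n _ (HX (fun t => fst (snd (X t))) ltac:(simpl; tauto)) j).
  assert (H4 := smooth_is_derive_Derive_n _ (HX (fun t => snd (snd (X t))) ltac:(simpl; tauto)) j).
  pose proof (is_cderive_plus _ _ _ _
    (is_cderive_mult _ _ _ _ (is_cderive_pair _ _ _ _ H1 H2) (is_cderive_const (RtoC (fst e))))
    (is_cderive_mult _ _ _ _ (is_cderive_pair _ _ _ _ H3 H4) (is_cderive_const (RtoC (snd e)))))
    as H.
  eapply is_cderive_ext; [| |exact H]; intro t; unfold dcomp, cdot, Dn; simpl; [reflexivity|ring].
Qed.

Lemma cbounded_dcomp (X : R -> C2) (e : vec2) :
  bounded_on_halfline X -> cbounded (dcomp X e 0).
Proof.
  intros [M HM]. exists (M * Rabs (fst e) + M * Rabs (snd e)). intros t Ht.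
  unfold dcomp. rewrite Dn_0. unfold cdot. destruct (HM t Ht) as [A B].
  eapply Rle_trans; [apply Cmod_triangle|]. rewrite !Cmod_mult, !Cmod_R.
  pose proof (Rabs_pos (fst e)). pose proof (Rabs_pos (snd e)). nra.
Qed.

Lemma perp_eq (d : vec2) : perp d = (- snd d, fst d).
Proof. unfold perp, rot. rewrite cos_PI2, sin_PI2. destruct d; simpl; f_equal; ring. Qed.

Lemma cdot_rot (Y : C2) (phi : R) (d : vec2) :
  cdot Y (rot phi d) = (cos phi * cdot Y d + sin phi * cdot Y (perp d))%C.
Proof.
  rewrite perp_eq. destruct Y as [[a1 a2] [b1 b2]], d as [x y].
  unfold cdot, rot; apply C_eq; simpl; ring.
Qed.

Lemma cdot_perp_rot (Y : C2) (phi : R) (d : vec2) :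
  cdot Y (perp (rot phi d)) = (cos phi * cdot Y (perp d) - sin phi * cdot Y d)%C.
Proof.
  rewrite !perp_eq. destruct Y as [[a1 a2] [b1 b2]], d as [x y].
  unfold cdot, rot; apply C_eq; simpl; ring.
Qed.

Lemma cdot_unrot (Y : C2) (phi : R) (d : vec2) :
  cdot Y d = (cos phi * cdot Y (rot phi d) - sin phi * cdot Y (perp (rot phi d)))%C.
Proof.
  assert (Hpyth : (RtoC (sin phi) * RtoC (sin phi) + RtoC (cos phi) * RtoC (cos phi))%C = 1%C).
  { rewrite <- !RtoC_mult, <- RtoC_plus. pose proof (sin2_cos2 phi) as H. unfold Rsqr in H.
    rewrite H. reflexivity. }
  rewrite cdot_rot, cdot_perp_rot.
  transitivity ((sin phi * sin phi + cos phi * cos phi) * cdot Y d)%C; [rewrite Hpyth|]; ring.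
Qed.

Lemma rdot_rot_rot (phi : R) (d : vec2) : rdot (rot phi d) (rot phi d) = rdot d d.
Proof.
  destruct d as [x y]; unfold rdot, rot; simpl.
  pose proof (sin2_cos2 phi) as H. unfold Rsqr in H. nra.
Qed.

Lemma cdot_C2zero (d : vec2) : cdot C2zero d = 0%C.
Proof. unfold cdot, C2zero; simpl. ring. Qed.

Lemma C2_eq0_of_cdot (Y : C2) (d : vec2) : rdot d d = 1 ->
  cdot Y d = 0%C -> cdot Y (perp d) = 0%C -> Y = C2zero.
Proof.
  rewrite perp_eq. destruct Y as [[a1 a2] [b1 b2]], d as [x y]; unfold rdot, cdot, C2zero; simpl.
  intros H E1 E2. injection E1 as E1r E1i. injection E2 as E2r E2i.
  assert (a1 = 0) by nra. assert (b1 = 0) by nra. assert (a2 = 0) by nra. assert (b2 = 0) by nra.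
  subst; reflexivity.
Qed.

Definition grain_eq (s : C) (X : R -> C2) (d : vec2) : Prop := forall t, 0 < t ->
  (s * cdot (X t) (perp d))%C = cdot (Dn 2 X t) (perp d) /\ cdot (Dn 2 X t) d = RtoC 0.

Definition surface_eq (s : C) (X : R -> C2) (d : vec2) : Prop := forall t, 0 < t ->
  (s * cdot (X t) (perp d))%C = (- cdot (Dn 4 X t) (perp d))%C /\ cdot (Dn 2 X t) d = RtoC 0.

Lemma branch_tangential (X : R -> C2) (d : vec2) : smooth X -> bounded_on_halfline X ->
  (forall t, 0 < t -> cdot (Dn 2 X t) d = 0%C) ->
  cdot (Dn 1 X 0) d = 0%C /\ forall t, 0 <= t -> cdot (X t) d = cdot (X 0) d.
Proof.
  intros HX HB HT.
  destruct (bounded_affine_const (dcomp X d) (chain_dcomp X d HX) HT (cbounded_dcomp X d HB))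
    as [H1 H0].
  split; [exact H1|]. intros t Ht. pose proof (H0 t Ht) as E. unfold dcomp in E.
  rewrite !Dn_0 in E. exact E.
Qed.

Lemma grain_ode (s mu : C) (X : R -> C2) (d : vec2) : (mu * mu)%C = s -> grain_eq s X d ->
  forall t, 0 < t -> dcomp X (perp d) 2 t = (mu * mu * dcomp X (perp d) 0 t)%C.
Proof.
  intros Hmu HE t Ht. unfold dcomp. rewrite Dn_0, Hmu. symmetry. apply (HE t Ht).
Qed.

Lemma surface_ode (s a b : C) (X : R -> C2) (d : vec2) :
  (a * a + b * b)%C = 0%C -> (a * a * (b * b))%C = s -> surface_eq s X d ->
  forall t, 0 < t -> dcomp X (perp d) 4 t =
    ((a * a + b * b) * dcomp X (perp d) 2 t - a * a * (b * b) * dcomp X (perp d) 0 t)%C.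
Proof.
  intros Hsum Hprod HE t Ht. unfold dcomp. rewrite Dn_0, Hsum, Hprod.
  destruct (HE t Ht) as [E _]. rewrite E. ring.
Qed.

Lemma grain_branch_boundary (s mu : C) (X : R -> C2) (d : vec2) :
  (mu * mu)%C = s -> 0 < Re mu -> smooth X -> bounded_on_halfline X -> grain_eq s X d ->
  cdot (Dn 1 X 0) d = 0%C /\ cdot (Dn 1 X 0) (perp d) = (- mu * cdot (X 0) (perp d))%C.
Proof.
  intros Hmu Hre HX HB HE. split.
  - apply (branch_tangential X d HX HB). intros t Ht. apply (HE t Ht).
  - rewrite <- (Dn_0 X 0).
    apply (bounded_second_order_slope (dcomp X (perp d)) mu); auto.
    + apply chain_dcomp, HX.
    + apply (grain_ode s), HE; auto.
    + apply cbounded_dcomp, HB.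
Qed.

Lemma surface_branch_boundary (s a b : C) (X : R -> C2) (d : vec2) :
  (a * a + b * b)%C = 0%C -> (a * a * (b * b))%C = s ->
  Re a < 0 -> Re b < 0 -> (a * a)%C <> (b * b)%C ->
  smooth X -> bounded_on_halfline X -> surface_eq s X d ->
  cdot (Dn 1 X 0) d = 0%C /\
  cdot (Dn 2 X 0) (perp d) =
    ((a + b) * cdot (Dn 1 X 0) (perp d) - a * b * cdot (Dn 0 X 0) (perp d))%C /\
  cdot (Dn 3 X 0) (perp d) =
    ((a + b) * cdot (Dn 2 X 0) (perp d) - a * b * cdot (Dn 1 X 0) (perp d))%C.
Proof.
  intros Hsum Hprod Ha Hb Hab HX HB HE. split.
  - apply (branch_tangential X d HX HB). intros t Ht. apply (HE t Ht).
  - apply (bounded_fourth_order_relations (dcomp X (perp d)) a b); auto.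
    + apply chain_dcomp, HX.
    + apply (surface_ode s), HE; auto.
    + apply cbounded_dcomp, HB.
Qed.

Lemma grain_branch_vanishes (s mu : C) (X : R -> C2) (d : vec2) :
  (mu * mu)%C = s -> rdot d d = 1 -> smooth X -> bounded_on_halfline X -> grain_eq s X d ->
  X 0 = C2zero -> cdot (Dn 1 X 0) (perp d) = 0%C ->
  forall t, 0 <= t -> X t = C2zero.
Proof.
  intros Hmu Hd HX HB HE H0 H1 t Ht.
  destruct (Req_dec t 0) as [->|Ht0]; [exact H0|].
  apply (C2_eq0_of_cdot _ d Hd).
  - destruct (branch_tangential X d HX HB) as [_ HT]; [intros u Hu; apply (HE u Hu)|].
    rewrite HT, H0 by auto. apply cdot_C2zero.
  - rewrite <- (Dn_0 X t). change (dcomp X (perp d) 0 t = 0%C).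
    apply (chain_zero_of_dprod_zero (mu :: (- mu)%C :: nil)); [apply chain_dcomp, HX| | |lra].
    + intros u Hu. simpl. unfold dsub. rewrite (grain_ode s mu X d) by auto. ring.
    + intros j Hj. simpl in Hj. unfold dcomp.
      destruct j as [|[|j]]; [rewrite Dn_0, H0; apply cdot_C2zero | exact H1 | lia].
Qed.

Lemma surface_branch_vanishes (s a b : C) (X : R -> C2) (d : vec2) :
  (a * a + b * b)%C = 0%C -> (a * a * (b * b))%C = s ->
  rdot d d = 1 -> smooth X -> bounded_on_halfline X -> surface_eq s X d ->
  X 0 = C2zero -> cdot (Dn 1 X 0) (perp d) = 0%C ->
  cdot (Dn 2 X 0) (perp d) = 0%C -> cdot (Dn 3 X 0) (perp d) = 0%C ->
  forall t, 0 <= t -> X t = C2zero.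
Proof.
  intros Hsum Hprod Hd HX HB HE H0 H1 H2 H3 t Ht.
  destruct (Req_dec t 0) as [->|Ht0]; [exact H0|].
  apply (C2_eq0_of_cdot _ d Hd).
  - destruct (branch_tangential X d HX HB) as [_ HT]; [intros u Hu; apply (HE u Hu)|].
    rewrite HT, H0 by auto. apply cdot_C2zero.
  - rewrite <- (Dn_0 X t). change (dcomp X (perp d) 0 t = 0%C).
    apply (chain_zero_of_dprod_zero (a :: (- a)%C :: b :: (- b)%C :: nil));
      [apply chain_dcomp, HX| | |lra].
    + intros u Hu. simpl. unfold dsub. rewrite (surface_ode s a b X d) by auto. ring.
    + intros j Hj. simpl in Hj. unfold dcomp.
      destruct j as [|[|[|[|j]]]]; [rewrite Dn_0, H0; apply cdot_C2zero | auto | auto | auto | lia].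
Qed.

(** * The junction *)

Definition csqrt (z : C) : C :=
  let u := sqrt ((Cmod z + Re z) / 2) in (u, Im z / (2 * u)).

Lemma csqrt_spec (z : C) : 0 < Re z -> (csqrt z * csqrt z)%C = z /\ 0 < Re (csqrt z).
Proof.
  destruct z as [x y]; unfold csqrt, Cmod, Re, Im; simpl. intros Hx.
  set (m := sqrt (x * (x * 1) + y * (y * 1))).
  assert (Hm : m * m = x * x + y * y) by (unfold m; rewrite sqrt_sqrt; nra).
  assert (Hm0 : 0 <= m) by apply sqrt_pos.
  set (u := sqrt ((m + x) / 2)).
  assert (Hu : u * u = (m + x) / 2) by (unfold u; rewrite sqrt_sqrt; lra).
  assert (Hu0 : 0 < u) by (unfold u; apply sqrt_lt_R0; lra).
  split; [|exact Hu0].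
  unfold Cmult; simpl. f_equal.
  - field_simplify; [|lra].
    replace (u ^ 4) with ((u * u) * (u * u)) by ring. replace (u ^ 2) with (u * u) by ring.
    rewrite Hu. field_simplify; [|lra].
    replace (m ^ 2) with (m * m) by ring. rewrite Hm. field; lra.
  - field. lra.
Qed.

(** With [nu^4 = s] and [omega = exp (i pi/4)], the roots of [z^4 = -s] are
    [± omega nu] and [± conj omega nu]; [a] and [b] are the two with negative real part. *)
Lemma quartic_roots (s : C) : 0 < Re s -> exists a b mu : C,
  (mu * mu)%C = s /\ 0 < Re mu /\
  (a * a + b * b)%C = 0%C /\ (a * a * (b * b))%C = s /\ (a * b)%C = mu /\
  Re a < 0 /\ Re b < 0 /\ (a * a)%C <> (b * b)%C.
Proof.
  intros Hs.
  destruct (csqrt_spec s Hs) as [Hmu Hmupos]. set (mu := csqrt s) in *.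
  destruct (csqrt_spec mu Hmupos) as [Hnu Hnupos]. set (nu := csqrt mu) in *.
  destruct nu as [x0 y0] eqn:Enu. unfold Re in Hnupos; simpl in Hnupos.
  assert (Hxy : y0 < x0 /\ - y0 < x0).
  { rewrite <- Hnu in Hmupos. unfold Re in Hmupos; simpl in Hmupos. split; nra. }
  set (r := sqrt 2 / 2).
  assert (Hr : r * r = 1 / 2).
  { unfold r. replace (sqrt 2 / 2 * (sqrt 2 / 2)) with (sqrt 2 * sqrt 2 / 4) by field.
    rewrite sqrt_sqrt; lra. }
  assert (Hr0 : 0 < r) by (unfold r; pose proof (sqrt_lt_R0 2 ltac:(lra)); lra).
  set (w := (r, r) : C). set (w' := (r, - r) : C).
  assert (Hww : (w * w)%C = (0, 1)) by (apply C_eq; simpl; nra).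
  assert (Hww' : (w * w')%C = 1%C) by (apply C_eq; simpl; nra).
  assert (Hw'w' : (w' * w')%C = (0, - 1)) by (apply C_eq; simpl; nra).
  exists (- (w * (x0, y0)))%C, (- (w' * (x0, y0)))%C, mu.
  repeat split; auto.
  - replace (_ + _)%C with ((w * w + w' * w') * mu)%C by (rewrite <- Hnu; ring).
    rewrite Hww, Hw'w'.
    replace ((0, 1) + (0, -1))%C with (RtoC 0) by (apply C_eq; simpl; ring). ring.
  - replace (_ * _)%C with ((w * w) * (w' * w') * (mu * mu))%C by (rewrite <- Hnu; ring).
    rewrite Hww, Hw'w', Hmu.
    replace ((0, 1) * (0, -1))%C with (RtoC 1) by (apply C_eq; simpl; ring). ring.
  - replace (_ * _)%C with ((w * w') * ((x0, y0) * (x0, y0)))%C by ring.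
    rewrite Hww', Hnu. ring.
  - unfold Re; simpl. nra.
  - unfold Re; simpl. nra.
  - intro E. apply (Cmult_neq_0 (0, 2) mu).
    + intro E0. injection E0. lra.
    + apply Re_neq0. lra.
    + replace ((0, 2) * mu)%C with ((w * w - w' * w') * mu)%C
        by (rewrite Hww, Hw'w'; f_equal; apply C_eq; simpl; ring).
      rewrite <- Hnu. transitivity ((- (w * (x0, y0))) * (- (w * (x0, y0)))
        - (- (w' * (x0, y0))) * (- (w' * (x0, y0))))%C; [ring|]. rewrite E. ring.
Qed.

Lemma junction_normal_slope (d1 : vec2) (phi : R) (Y1 Y : C2) :
  sin phi <> 0 -> cdot Y1 d1 = 0%C -> cdot Y (rot phi d1) = 0%C ->
  (cdot Y d1 + cdot Y1 (rot phi d1)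
     - RtoC (rdot d1 (rot phi d1)) * (cdot Y1 d1 + cdot Y (rot phi d1)))%C = RtoC 0 ->
  cdot Y (perp (rot phi d1)) = cdot Y1 (perp d1).
Proof.
  intros Hs H1 H Hii.
  rewrite H, (cdot_unrot Y phi d1), H, cdot_rot, H1 in Hii.
  set (B := cdot Y (perp (rot phi d1))) in *. set (B1 := cdot Y1 (perp d1)) in *.
  apply Csub0, (Cmult_eq0 (RtoC (sin phi))); [apply RtoC_neq0, Hs|].
  transitivity (- ((cos phi * 0 - sin phi * B) + (cos phi * 0 + sin phi * B1)
                   - rdot d1 (rot phi d1) * (0 + 0)))%C; [ring|].
  rewrite Hii. ring.
Qed.

Lemma junction_system (sg pi p q n V2 V3 : C) (c2 s2 c3 s3 : R) :
  sg <> 0%C -> pi <> 0%C -> s2 <> 0 -> (sg * (s3 - s2) + (s3 * c2 - s2 * c3))%C <> 0%C ->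
  n = (- pi * q)%C ->
  V2 = (sg * n - pi * (c2 * q - s2 * p))%C -> V3 = (sg * V2 - pi * n)%C ->
  (- V2)%C = (sg * n - pi * (c3 * q - s3 * p))%C -> V3 = (sg * - V2 - pi * n)%C ->
  p = 0%C /\ q = 0%C /\ V2 = 0%C /\ V3 = 0%C.
Proof.
  intros Hsg Hpi Hs2 Hdet Hn E2 G2 E3 G3.
  assert (HV2 : V2 = 0%C).
  { apply (Cmult_eq0 (2 * sg)); [apply Cmult_neq_0; [apply RtoC_neq0; lra | exact Hsg]|].
    transitivity ((sg * V2 - pi * n) - (sg * - V2 - pi * n))%C; [ring|].
    rewrite <- G2, <- G3. ring. }
  assert (R2 : (c2 * q - s2 * p)%C = (- sg * q)%C).
  { apply Csub0, (Cmult_eq0 pi _ Hpi).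
    transitivity (- (sg * n - pi * (c2 * q - s2 * p)))%C; [rewrite Hn; ring|].
    rewrite <- E2, HV2. ring. }
  assert (R3 : (c3 * q - s3 * p)%C = (- sg * q)%C).
  { apply Csub0, (Cmult_eq0 pi _ Hpi).
    transitivity (- (sg * n - pi * (c3 * q - s3 * p)))%C; [rewrite Hn; ring|].
    rewrite <- E3, HV2. ring. }
  assert (Hq : q = 0%C).
  { apply (Cmult_eq0 _ _ Hdet).
    transitivity (s3 * ((c2 * q - s2 * p) - - sg * q) - s2 * ((c3 * q - s3 * p) - - sg * q))%C;
      [ring|].
    rewrite R2, R3. ring. }
  assert (Hp : p = 0%C).
  { apply (Cmult_eq0 (RtoC s2) _ (RtoC_neq0 _ Hs2)).
    transitivity (c2 * q - (c2 * q - s2 * p))%C; [ring|].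
    rewrite R2, Hq. ring. }
  repeat split; auto. rewrite G2, HV2, Hn, Hq. ring.
Qed.

Lemma junction_angles_nondegenerate (sg : C) (th12 th13 : R) : Re sg < 0 ->
  0 < th12 < PI -> 0 < th13 < PI -> th12 + th13 >= PI ->
  (sg * (sin th13 - sin (- th12)) + (sin th13 * cos (- th12) - sin (- th12) * cos th13))%C
    <> 0%C.
Proof.
  intros Hsg H12 H13 Hsum. rewrite sin_neg, cos_neg.
  assert (0 < sin th12) by (apply sin_gt_0; lra).
  assert (0 < sin th13) by (apply sin_gt_0; lra).
  assert (sin th13 * cos th12 - - sin th12 * cos th13 <= 0).
  { replace (sin th13 * cos th12 - - sin th12 * cos th13) with (sin (th12 + th13))
      by (rewrite sin_plus; ring).
    apply sin_le_0; lra. }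
  apply Re_neq0. unfold Re in *; simpl. nra.
Qed.

Theorem mainTheorem6
  (d1 d2 d3 : vec2) (th12 th13 : R) (s : CC) (X1 X2 X3 : R -> C2) :
  rdot d1 d1 = 1 ->
  d2 = rot (- th12) d1 ->
  d3 = rot th13 d1 ->
  0 < th12 < PI -> 0 < th13 < PI -> th12 + th13 >= PI ->
  0 < Re s ->
  smooth X1 -> smooth X2 -> smooth X3 ->
  bounded_on_halfline X1 -> bounded_on_halfline X2 -> bounded_on_halfline X3 ->
  (forall t, 0 < t ->
     (s * cdot (X1 t) (perp d1))%C = cdot (Dn 2 X1 t) (perp d1) /\
     cdot (Dn 2 X1 t) d1 = RtoC 0) ->
  (forall t, 0 < t ->
     (s * cdot (X2 t) (perp d2))%C = (- cdot (Dn 4 X2 t) (perp d2))%C /\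
     cdot (Dn 2 X2 t) d2 = RtoC 0) ->
  (forall t, 0 < t ->
     (s * cdot (X3 t) (perp d3))%C = (- cdot (Dn 4 X3 t) (perp d3))%C /\
     cdot (Dn 2 X3 t) d3 = RtoC 0) ->
  X1 0 = X2 0 -> X2 0 = X3 0 ->
  (cdot (Dn 1 X2 0) d1 + cdot (Dn 1 X1 0) d2
     - RtoC (rdot d1 d2) * (cdot (Dn 1 X1 0) d1 + cdot (Dn 1 X2 0) d2))%C = RtoC 0 ->
  (cdot (Dn 1 X3 0) d1 + cdot (Dn 1 X1 0) d3
     - RtoC (rdot d1 d3) * (cdot (Dn 1 X1 0) d1 + cdot (Dn 1 X3 0) d3))%C = RtoC 0 ->
  cdot (Dn 2 X2 0) (perp d2) = (- cdot (Dn 2 X3 0) (perp d3))%C ->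
  cdot (Dn 3 X2 0) (perp d2) = cdot (Dn 3 X3 0) (perp d3) ->
  forall t, 0 <= t -> X1 t = C2zero /\ X2 t = C2zero /\ X3 t = C2zero.
Proof.
  intros Hd1 -> -> Hth12 Hth13 Hth Hs HX1 HX2 HX3 HB1 HB2 HB3 HE1 HE2 HE3
         H12 H23 Hii2 Hii3 Hiii Hiv.
  destruct (quartic_roots s Hs)
    as (a & b & mu & Hmu & Hremu & Hsum & Hprod & Hab & Ha & Hb & Hdist).
  assert (Hsin12 : sin (- th12) <> 0) by (rewrite sin_neg; pose proof (sin_gt_0 th12); lra).
  assert (Hsin13 : sin th13 <> 0) by (pose proof (sin_gt_0 th13); lra).
  destruct (grain_branch_boundary s mu X1 d1) as [T1 N1]; auto.
  destruct (surface_branch_boundary s a b X2 (rot (- th12) d1)) as (T2 & F2 & G2); auto.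
  destruct (surface_branch_boundary s a b X3 (rot th13 d1)) as (T3 & F3 & G3); auto.
  pose proof (junction_normal_slope d1 (- th12) _ _ Hsin12 T1 T2 Hii2) as J2.
  pose proof (junction_normal_slope d1 th13 _ _ Hsin13 T1 T3 Hii3) as J3.
  rewrite Dn_0, <- H12, (cdot_perp_rot (X1 0)), J2 in F2. rewrite J2 in G2.
  assert (Hiii' : cdot (Dn 2 X3 0) (perp (rot th13 d1)) =
                  (- cdot (Dn 2 X2 0) (perp (rot (- th12) d1)))%C) by (rewrite Hiii; ring).
  rewrite Dn_0, <- H23, <- H12, (cdot_perp_rot (X1 0)), J3, Hiii' in F3.
  rewrite J3, Hiii', <- Hiv in G3.
  rewrite <- Hab in N1.
  assert (Hsg : Re (a + b) < 0) by (unfold Re in *; simpl; lra).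
  assert (Hpi : (a * b)%C <> 0%C) by (rewrite Hab; apply Re_neq0; lra).
  destruct (junction_system (a + b) (a * b) _ _ _ _ _ _ _ _ _
              (Re_neq0 _ (Rlt_not_eq _ _ Hsg)) Hpi Hsin12
              (junction_angles_nondegenerate _ th12 th13 Hsg Hth12 Hth13 Hth) N1 F2 G2 F3 G3)
    as (Hp & Hq & HV2 & HV3).
  assert (X10 : X1 0 = C2zero) by (apply (C2_eq0_of_cdot _ d1); auto).
  assert (Hn : cdot (Dn 1 X1 0) (perp d1) = 0%C) by (rewrite N1, Hq; ring).
  intros t Ht. split; [|split].
  - apply (grain_branch_vanishes s mu X1 d1); auto.
  - apply (surface_branch_vanishes s a b X2 (rot (- th12) d1)); auto;
      [rewrite rdot_rot_rot; auto | congruence | congruence].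
  - apply (surface_branch_vanishes s a b X3 (rot th13 d1)); auto;
      [rewrite rdot_rot_rot; auto | congruence | congruence
      | rewrite Hiii', HV2; ring | congruence].
Qed.
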